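(* Let $a<b$, let $\alpha\in(0,1]$, let $k:[a,b]\to\mathbb{R}$ be a continuous nonnegative map, differentiable at every $t>a$, with $k(t)\neq 0$ and $k'(t)\neq 0$ whenever $t>a$. Let $f:[a,b]\to\mathbb{R}$ and let $t_0\in(a,b)$ with $t_0>0$. If $f$ is $\alpha$-differentiable at $t_0$, then $f$ is continuous at $t_0$.
   Context: For $k$ as in the claim, $f:[a,b]\to\mathbb{R}$, $\alpha\in(0,1]$ and $t\in(a,b)$, the generalized fractional derivative of $f$ of order $\alpha$ at $t$ is $$D^{\alpha}(f)(t)=f^{(\alpha)}(t):=\lim_{\varepsilon\to 0}\frac{f\left(t-k(t)+k(t)\,e^{\varepsilon\frac{(k(t))^{-\alpha}}{k'(t)}}\right)-f(t)}{\varepsilon},$$ and $f$ is called $\alpha$-differentiable at $t$ if this limit exists (for $|\varepsilon|$ small the argument of $f$ lies in $[a,b]$). *)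

From Stdlib Require Import Reals Lra.
From Coquelicot Require Import Coquelicot.
Open Scope R_scope.

Definition frac_arg (k : R -> R) (alpha t eps : R) : R :=
  t - k t + k t * exp (eps * Rpower (k t) (- alpha) / Derive k t).

(* Difference quotient whose limit (eps -> 0) is D^alpha(f)(t). *)
Definition frac_quot (k f : R -> R) (alpha t eps : R) : R :=
  (f (frac_arg k alpha t eps) - f t) / eps.

Definition alpha_differentiable (k f : R -> R) (alpha t : R) : Prop :=
  exists L : R, is_lim (frac_quot k f alpha t) 0 (Finite L).

(** The change of variables [x = t - K + K exp(c e)], with [K = k t > 0] and
    [c = k(t)^(-alpha) / k'(t) <> 0], is a local diffeomorphism from a
    neighbourhood of [e = 0] onto a neighbourhood of [x = t], with inverse
    [x |-> ln((x - t + K) / K) / c].  A finite limit of the difference quotient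
    [(f(x(e)) - f(t)) / e] forces [f(x(e)) -> f(t)] as [e -> 0], and composing
    with the continuous inverse gives continuity of [f] at [t].  Only
    [k t > 0] and [k'(t) <> 0] are used from the hypotheses. *)
From Stdlib Require Import Reals Lra.
From Coquelicot Require Import Coquelicot.
Open Scope R_scope.

Lemma is_lim_continuous (f : R -> R) (x : R) : is_lim f x (f x) -> continuous f x.
Proof.
  intro Hlim.
  apply continuity_pt_filterlim, continuity_pt_filterlim'.
  exact Hlim.
Qed.

Lemma is_lim_of_diff_quot (F : R -> R) (y L : R) :
  is_lim (fun e => (F e - y) / e) 0 L -> is_lim F 0 y.
Proof.
  intro Hquot.
  assert (Hlim : is_lim (fun e => y + e * ((F e - y) / e)) 0 (y + 0 * L)).
  { apply (is_lim_plus _ _ _ y (0 * L)); [apply is_lim_const | | reflexivity].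
    apply (is_lim_mult _ _ _ 0 L); [apply is_lim_id | exact Hquot | exact I]. }
  replace (y + 0 * L) with y in Hlim by ring.
  apply (is_lim_ext_loc (fun e => y + e * ((F e - y) / e))); [|exact Hlim].
  exists (mkposreal 1 Rlt_0_1); intros e _ He.
  field; exact He.
Qed.

Lemma continuous_of_right_inverse (f g h : R -> R) (t : R) :
  continuous h t ->
  locally t (fun y => g (h y) = y) ->
  continuous (fun e => f (g e)) (h t) ->
  continuous f t.
Proof.
  intros Hh Hgh Hfg.
  pose proof (continuous_comp h (fun e => f (g e)) t Hh Hfg) as Hfgh.
  unfold continuous in Hfgh |- *.
  rewrite (locally_singleton _ _ Hgh) in Hfgh.
  apply (filterlim_ext_loc (fun y => f (g (h y)))); [|exact Hfgh].
  apply (filter_imp (fun y => g (h y) = y)); [|exact Hgh].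
  now intros y ->.
Qed.

Section ExpChart.

Variables t K c : R.
Hypothesis K_gt0 : 0 < K.

Definition exp_chart (e : R) : R := t - K + K * exp (e * c).

Definition log_chart (y : R) : R := ln ((y - t + K) / K) / c.

Lemma exp_chart0 : exp_chart 0 = t.
Proof. unfold exp_chart; rewrite Rmult_0_l, exp_0; ring. Qed.

Lemma log_chart_t : log_chart t = 0.
Proof.
  unfold log_chart.
  replace ((t - t + K) / K) with 1 by (field; lra).
  rewrite ln_1; unfold Rdiv; ring.
Qed.

Lemma continuous_log_chart : continuous log_chart t.
Proof.
  apply (@ex_derive_continuous R_AbsRing R_NormedModule).
  unfold log_chart; auto_derive.
  replace ((t + - t + K) * / K) with 1 by (field; lra).
  lra.
Qed.

Lemma exp_chart_log_chart :
  c <> 0 -> locally t (fun y => exp_chart (log_chart y) = y).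
Proof.
  intro c_neq0.
  apply (filter_imp (fun y => t - K < y)).
  - intros y Hy.
    unfold exp_chart, log_chart.
    replace (ln ((y - t + K) / K) / c * c) with (ln ((y - t + K) / K))
      by (field; exact c_neq0).
    rewrite exp_ln by (apply Rdiv_lt_0_compat; lra).
    field; lra.
  - apply open_gt; lra.
Qed.

End ExpChart.

Lemma frac_arg_exp_chart (k : R -> R) (alpha t e : R) :
  frac_arg k alpha t e
  = exp_chart t (k t) (Rpower (k t) (- alpha) / Derive k t) e.
Proof. unfold frac_arg, exp_chart, Rdiv; rewrite Rmult_assoc; reflexivity. Qed.

Theorem mainTheorem2 (a b alpha : R) (k f : R -> R) (t0 : R) :
  a < b ->
  0 < alpha <= 1 ->
  (forall t, a <= t <= b ->
     filterlim k (within (fun x => a <= x <= b) (locally t)) (locally (k t))) ->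
  (forall t, a <= t <= b -> 0 <= k t) ->
  (forall t, a < t < b -> ex_derive k t) ->
  (forall t, a < t <= b -> k t <> 0) ->
  (forall t, a < t < b -> Derive k t <> 0) ->
  a < t0 < b ->
  0 < t0 ->
  alpha_differentiable k f alpha t0 ->
  continuous f t0.
Proof.
  intros _ _ _ k_ge0 _ k_neq0 Dk_neq0 Ht0 _ [L Hquot].
  assert (K_gt0 : 0 < k t0).
  { assert (k t0 <> 0) by (apply k_neq0; lra).
    assert (0 <= k t0) by (apply k_ge0; lra).
    lra. }
  set (c := Rpower (k t0) (- alpha) / Derive k t0).
  assert (c_neq0 : c <> 0).
  { apply Rmult_integral_contrapositive_currified.
    - apply Rgt_not_eq, exp_pos.
    - apply Rinv_neq_0_compat, Dk_neq0; lra. }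
  set (g := exp_chart t0 (k t0) c).
  assert (Hfg : continuous (fun e => f (g e)) 0).
  { apply is_lim_continuous.
    replace (g 0) with t0 by (symmetry; apply exp_chart0).
    apply (is_lim_of_diff_quot _ _ L).
    apply (is_lim_ext (frac_quot k f alpha t0)); [|exact Hquot].
    intro e; unfold frac_quot; rewrite frac_arg_exp_chart; reflexivity. }
  apply (continuous_of_right_inverse f g (log_chart t0 (k t0) c) t0).
  - exact (continuous_log_chart _ _ _ K_gt0).
  - exact (exp_chart_log_chart _ _ _ K_gt0 c_neq0).
  - rewrite (log_chart_t _ _ _ K_gt0); exact Hfg.
Qed.
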